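(* Let $r\geqslant 2$, $\ell\geqslant 1$ and $m=2^r(2^\ell+1)$. Then $\gcd(r,\ell)\leqslant 2$ if and only if, for every pair of distinct roots $\tau_i,\tau_j\in\overline{\mathbb F}_2$ of $(L_1(x^{m-1}))'$, one has $P_\ell(\tau_i+\tau_j)\neq 0$.
   Context: For $k\geqslant 1$, $P_k(x)=x+x^2+\dots+x^{2^{k-1}}$ is the $k$-th trace polynomial. For $m\equiv 0\pmod 4$, $L_1(x^{m-1})$ denotes the unique polynomial $Q$ of degree at most $(m-2)/2$ over $\mathbb F_2$ with $Q(x(x+1))=(x+1)^{m-1}+x^{m-1}$. *)

From HB Require Import structures.
From mathcomp Require Import all_boot all_order all_algebra all_field.
Set Implicit Arguments. Unset Strict Implicit. Unset Printing Implicit Defensive.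
Import GRing.Theory.
Local Open Scope ring_scope.

Definition mval (r l : nat) : nat := (2 ^ r * (2 ^ l + 1))%N.

Definition tracep (R : nzRingType) (k : nat) : {poly R} :=
  \sum_(i < k) 'X^(2 ^ i).

(* Q is L_1(x^(m-1)): deg Q <= (m-2)/2 and Q(x(x+1)) = (x+1)^(m-1) + x^(m-1) *)
Definition is_L1 (R : comNzRingType) (m : nat) (Q : {poly R}) : Prop :=
  (size Q <= ((m - 2) %/ 2).+1)%N /\
  Q \Po ('X * ('X + 1)) = ('X + 1) ^+ (m - 1) + 'X ^+ (m - 1).

From HB Require Import structures.
From mathcomp Require Import all_boot all_order all_algebra all_field.
From mathcomp Require Import ring zify.
Import GRing.Theory.
Set Implicit Arguments.
Unset Strict Implicit.
Unset Printing Implicit Defensive.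
Local Open Scope ring_scope.

(* Every root of Q' in the algebraic closure is t = x(x+1), and differentiating
   Q(x(x+1)) = (x+1)^(m-1) + x^(m-1) in characteristic 2 shows that t is a root
   exactly when (x+1)^(m-2) = x^(m-2); for r = a+1 this reads x(A+B+1) = AB with
   A = x^(2^a), B = A^(2^l).  Two roots x(x+1), y(y+1) add up to d(d+1) with
   d = x + y, and P_l(d(d+1)) = d^(2^l) + d, so the condition fails exactly when
   some such d lies in F_(2^l) \ F_2.  Comparing the equations of x and x + d and
   applying z |-> z^(2^l) then puts x and d in F_(2^r) and F_(2^l), hence in
   F_(2^gcd(r,l)).  If gcd(r,l) <= 2 both are roots of z^2 + z + 1, so y = x + d
   would lie in F_2, which it does not.  If gcd(r,l) >= 3, any x, y of
   F_(2^gcd(r,l)) outside F_2 satisfy the root equation, and there is room to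
   choose them with x + y outside F_2. *)

Lemma mvalS a b : mval a.+1 b = (2 ^ a * (2 ^ b + 1)).*2.
Proof. by rewrite /mval expnS -mulnA mul2n. Qed.

Section Pchar2Ring.
Variable R : comNzRingType.
Hypothesis pchar2R : (2 \in [pchar R])%N.

Lemma pchar2_eq (u v w : R) : u - v = 2%:R * w -> u = v.
Proof. by move=> uv; apply/eqP; rewrite -subr_eq0 uv (pcharf0 pchar2R) mul0r. Qed.

(* [ring] ignores the characteristic; these let it certify consequences of
   hypotheses modulo 2. *)
Lemma pchar2_lincomb1 (u v a b c w : R) :
  a = b -> u - v = c * (a - b) + 2%:R * w -> u = v.
Proof. by move=> <-; rewrite subrr mulr0 add0r; apply: pchar2_eq. Qed.

Lemma pchar2_lincomb2 (u v a1 b1 a2 b2 c1 c2 w : R) : a1 = b1 -> a2 = b2 ->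
  u - v = c1 * (a1 - b1) + c2 * (a2 - b2) + 2%:R * w -> u = v.
Proof. by move=> <- <-; rewrite !subrr !mulr0 !add0r; apply: pchar2_eq. Qed.

Lemma addr_eq0_pchar2 (x y : R) : (x + y == 0) = (x == y).
Proof. by rewrite addr_eq0 oppr_pchar2. Qed.

Lemma exprD_pow2 k (x y : R) : (x + y) ^+ (2 ^ k) = x ^+ (2 ^ k) + y ^+ (2 ^ k).
Proof.
apply: exprDn_pchar; rewrite pnatX orbC; case: eqP => //= _.
by rewrite (eq_pnat _ (pcharf_eq pchar2R)) pnat_id.
Qed.

Lemma XmulXD1_add (x y : R) : x * (x + 1) + y * (y + 1) = (x + y) * (x + y + 1).
Proof. by apply: (@pchar2_eq _ _ (- (x * y))); ring. Qed.

Lemma horner_tracep_pchar2 l (y : R) : (tracep R l).[y * (y + 1)] = y ^+ (2 ^ l) + y.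
Proof.
elim: l => [|l IHl].
  by rewrite /tracep big_ord0 horner0 expr1 addrr_pchar2.
rewrite /tracep big_ord_recr /= hornerD -/(tracep R l) IHl hornerXn.
rewrite (mulrC y) exprMn exprD_pow2 expr1n expnSr exprM.
by apply: (@pchar2_eq _ _ (y ^+ (2 ^ l))); ring.
Qed.

Let pchar2_poly : (2 \in [pchar {poly R}])%N.
Proof. by rewrite pchar_poly. Qed.

Lemma deriv_comp_XmulXD1 (Q : {poly R}) :
  (Q \Po ('X * ('X + 1)))^`() = Q^`() \Po ('X * ('X + 1)).
Proof.
rewrite deriv_comp derivM derivD derivX derivC addr0 mul1r mulr1.
by rewrite addrAC addrr_pchar2 // add0r mulr1.
Qed.

Lemma deriv_L1_comp m (Q : {poly R}) : odd m.-1 -> is_L1 m Q ->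
  Q^`() \Po ('X * ('X + 1)) = ('X + 1) ^+ (m - 2) + 'X ^+ (m - 2).
Proof.
move=> odd_m [_ Q_L1].
rewrite -deriv_comp_XmulXD1 Q_L1 derivD !deriv_exp.
rewrite derivD derivX derivC addr0 !mul1r -mulrnDl subnS subn0 -subn2.
by rewrite -mulr_natr -(GRing.natr_mod_pchar pchar2_poly) modn2 odd_m mulr1.
Qed.

Lemma root_deriv_L1 a b (Q : {poly R}) (x : R) : is_L1 (mval a.+1 b) Q ->
  root Q^`() (x * (x + 1)) =
    ((x + 1) ^+ (mval a.+1 b - 2) == x ^+ (mval a.+1 b - 2)).
Proof.
move=> Q_L1; have odd_m : odd (mval a.+1 b).-1.
  have N_gt0 : (0 < 2 ^ a * (2 ^ b + 1))%N by rewrite muln_gt0 expn_gt0 addn1.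
  by rewrite mvalS -(prednK N_gt0) doubleS /= odd_double.
have -> : x * (x + 1) = ('X * ('X + 1)).[x] by rewrite !hornerE.
by rewrite /root -horner_comp (deriv_L1_comp odd_m Q_L1) !hornerE addr_eq0_pchar2.
Qed.

End Pchar2Ring.

Section FixedPoints.
Variable R : pzSemiRingType.

Lemma expr_fixed_expn n k (z : R) : z ^+ n = z -> z ^+ (n ^ k) = z.
Proof.
move=> zn; elim: k => [|k IHk]; first by rewrite expr1.
by rewrite expnSr exprM IHk zn.
Qed.

Lemma expr_fixed_dvdn n k k' (z : R) : (k %| k')%N -> z ^+ (n ^ k) = z -> z ^+ (n ^ k') = z.
Proof. by move=> /dvdnP [c ->] zk; rewrite mulnC expnM expr_fixed_expn. Qed.

Lemma expr_fixed_gcdn n r l (z : R) : (0 < r)%N ->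
  z ^+ (n ^ r) = z -> z ^+ (n ^ l) = z -> z ^+ (n ^ gcdn r l) = z.
Proof.
move=> r_gt0 zr zl; have [a _ /dvdnP [k gcd_al]] := Bezoutl l r_gt0.
have := expr_fixed_expn k zr; rewrite -expnM mulnC -gcd_al expnD mulnC exprM.
by rewrite mulnC expnM (expr_fixed_expn a zl).
Qed.

End FixedPoints.

Section Pchar2Field.
Variable F : fieldType.
Hypothesis pchar2F : (2 \in [pchar F])%N.

Lemma sqrf_inj_pchar2 : injective (fun x : F => x ^+ 2).
Proof. by move=> x y /=; rewrite -!(pFrobenius_autE pchar2F) => /fmorph_inj. Qed.

Lemma exprD1_eq_neq0 n (x : F) : (0 < n)%N -> (x + 1) ^+ n = x ^+ n ->
  x != 0 /\ x + 1 != 0.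
Proof.
move=> n_gt0; have neq0 (z : F) : (z + 1) ^+ n = z ^+ n -> z != 0.
  move=> zn; apply/eqP => z0; move: zn.
  by rewrite z0 add0r expr1n expr0n gtn_eqF // mulr0n => /eqP; rewrite oner_eq0.
move=> xn; split; first exact: neq0 xn.
by apply: neq0; rewrite addrK_pchar2.
Qed.

Lemma root_X2X1_of_fixed_gcdn_le2 r l (z : F) : (0 < r)%N -> (gcdn r l <= 2)%N ->
  z != 0 -> z + 1 != 0 -> z ^+ (2 ^ r) = z -> z ^+ (2 ^ l) = z ->
  z ^+ 2 + z + 1 = 0.
Proof.
move=> r_gt0 gcd_le2 z0 z1 zr zl.
have z4 : z ^+ 4 = z.
  have : (0 < gcdn r l)%N by rewrite gcdn_gt0 r_gt0.
  move: (expr_fixed_gcdn r_gt0 zr zl); case: (gcdn r l) gcd_le2 => [|[|[|]]] //.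
  by rewrite expn1 => _ z2 _; rewrite -[4%N]/(2 * 2)%N exprM !z2.
have : z * (z + 1) * (z ^+ 2 + z + 1) = 0.
  by apply: (pchar2_lincomb1 pchar2F (c := 1) (w := z ^+ 3 + z ^+ 2 + z) z4); ring.
by move/eqP; rewrite !mulf_eq0 (negbTE z0) (negbTE z1) => /eqP.
Qed.

Definition L1_crit a b (x : F) : Prop :=
  let A := x ^+ (2 ^ a) in let B := A ^+ (2 ^ b) in x * (A + B + 1) = A * B.

Lemma L1_crit_of_root a b (x : F) :
  (x + 1) ^+ (mval a.+1 b - 2) = x ^+ (mval a.+1 b - 2) -> L1_crit a b x.
Proof.
rewrite /L1_crit mvalS; set N := (2 ^ a * (2 ^ b + 1))%N.
have N_gt0 : (0 < N)%N by rewrite muln_gt0 expn_gt0 addn1.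
rewrite -[X in (_ - X)%N]/(1.*2)%N -doubleB -muln2 !exprM subn1.
move=> /sqrf_inj_pchar2 xN.
have {xN} : x * (x + 1) ^+ N = (x + 1) * x ^+ N.
  by rewrite -(prednK N_gt0) !exprS xN; ring.
rewrite /N !exprM !exprD !expr1 !(exprD_pow2 pchar2F) !expr1n => xN.
by apply: (pchar2_lincomb1 pchar2F (c := 1) (w := 0) xN); ring.
Qed.

Lemma L1_crit_shift a b (x d : F) : d ^+ (2 ^ b) = d ->
  L1_crit a b x -> L1_crit a b (x + d) ->
  let A := x ^+ (2 ^ a) in let e := d ^+ (2 ^ a) in
  (d + e) * (A + A ^+ (2 ^ b)) = e ^+ 2 + d.
Proof.
rewrite /L1_crit /= => dQ; set A := x ^+ (2 ^ a); set B := A ^+ (2 ^ b).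
set e := d ^+ (2 ^ a) => xA.
have eQ : e ^+ (2 ^ b) = e by rewrite -!exprM mulnC exprM dQ.
rewrite !(exprD_pow2 pchar2F) -/A -/e -/B eQ => xdA.
pose w := e * (A + B - x - d) - d.
by apply: (pchar2_lincomb2 pchar2F (c1 := 1) (c2 := -1) (w := w) xdA xA); rewrite /w; ring.
Qed.

Lemma L1_crit_pair_fixed a b (x d : F) : x != 0 -> d != 0 -> d + 1 != 0 ->
  d ^+ (2 ^ b) = d -> L1_crit a b x -> L1_crit a b (x + d) ->
  [/\ x ^+ (2 ^ a.+1) = x, x ^+ (2 ^ b) = x & d ^+ (2 ^ a.+1) = d].
Proof.
move=> x0 d0 d1 dQ xA /(L1_crit_shift dQ xA); move: xA; rewrite /L1_crit /=.
set q := (2 ^ a)%N; set Q := (2 ^ b)%N; set A := x ^+ q; set B := A ^+ Q.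
set e := d ^+ q; set s := A + B => xs s_eq.
have eQ : e ^+ Q = e by rewrite -!exprM mulnC exprM dQ.
have de0 : d + e != 0.
  rewrite addr_eq0_pchar2 //; apply: contra_neq d1 => ed; move: s_eq.
  rewrite -ed addrr_pchar2 // mul0r expr2 -[X in _ + X]mulr1 -mulrDr => /esym/eqP.
  by rewrite mulf_eq0 (negbTE d0) => /eqP.
have sQ : s ^+ Q = s.
  (* [z |-> z^Q] fixes [d] and [e], so it fixes [s] in [s_eq]. *)
  apply: (mulfI de0); have := congr1 (fun z => z ^+ Q) s_eq.
  by rewrite /= exprMn !(exprD_pow2 pchar2F) -/Q dQ eQ [e ^+ 2 ^+ Q]exprAC eQ => ->.
have BQ : B ^+ Q = A.
  by move: sQ; rewrite /s (exprD_pow2 pchar2F) -/B [_ + B]addrC => /addrI.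
have s1 : s + 1 != 0.
  apply: contra_neq x0 => s1; move: xs; rewrite s1 mulr0 => /esym/eqP.
  by rewrite mulf_eq0 /B /A !expf_eq0 orbC => /orP [/and3P [_ _] | /andP [_]] /eqP.
have xQ : x ^+ Q = x.
  apply: (mulIf s1); have := congr1 (fun z => z ^+ Q) xs.
  by rewrite /= !exprMn (exprD_pow2 pchar2F) expr1n sQ BQ -/B => ->; rewrite xs mulrC.
have BA : B = A by rewrite /B /A -exprM mulnC exprM xQ.
have s0 : s = 0 by rewrite /s BA addrr_pchar2.
have d_e2 : d = e ^+ 2.
  by move: s_eq; rewrite s0 mulr0 => /esym/eqP; rewrite addr_eq0_pchar2 // => /eqP.
have x_A2 : x = A ^+ 2 by move: xs; rewrite s0 add0r mulr1 BA -expr2.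
by split; rewrite // expnSr exprM -/q; [rewrite -/A -x_A2 | rewrite -/e -d_e2].
Qed.

Lemma L1_root_pair_gcdn_le2 a b (x y : F) : (gcdn a.+1 b <= 2)%N ->
  (x + 1) ^+ (mval a.+1 b - 2) = x ^+ (mval a.+1 b - 2) ->
  (y + 1) ^+ (mval a.+1 b - 2) = y ^+ (mval a.+1 b - 2) ->
  (x + y) ^+ (2 ^ b) = x + y -> (x + y) * (x + y + 1) = 0.
Proof.
move=> gcd_le2 xm ym; set d := x + y => dQ.
have m_gt0 : (0 < mval a.+1 b - 2)%N.
  have := expn_gt0 2 a; have := expn_gt0 2 b; rewrite mvalS /=; nia.
have [x0 x1] := exprD1_eq_neq0 m_gt0 xm; have [y0 y1] := exprD1_eq_neq0 m_gt0 ym.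
have y_xd : y = x + d by rewrite /d addrA addrr_pchar2 // add0r.
apply/eqP; rewrite mulf_eq0; apply: contraT; rewrite negb_or => /andP [d0 d1].
rewrite y_xd in ym.
have [xr xl dr] :=
  L1_crit_pair_fixed x0 d0 d1 dQ (L1_crit_of_root xm) (L1_crit_of_root ym).
have x3 := root_X2X1_of_fixed_gcdn_le2 (ltn0Sn a) gcd_le2 x0 x1 xr xl.
have d3 := root_X2X1_of_fixed_gcdn_le2 (ltn0Sn a) gcd_le2 d0 d1 dr dQ.
have : y * (y + 1) = 0.
  rewrite y_xd.
  by apply: (pchar2_lincomb2 pchar2F (c1 := 1) (c2 := 1) (w := x * d - 1) x3 d3); ring.
by move/eqP; rewrite mulf_eq0 (negbTE y0) (negbTE y1).
Qed.

Lemma L1_root_of_fixed r l (x : F) : x != 0 -> x + 1 != 0 ->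
  x ^+ (2 ^ r) = x -> x ^+ (2 ^ l) = x ->
  (x + 1) ^+ (mval r l - 2) = x ^+ (mval r l - 2).
Proof.
have expr_m2 (z : F) : z != 0 -> z ^+ (2 ^ r) = z -> z ^+ (2 ^ l) = z ->
    z ^+ (mval r l - 2) = 1.
  move=> z0 zr zl; apply: (mulIf (expf_neq0 2 z0)).
  have m_ge2 : (2 <= mval r l)%N.
    by have := expn_gt0 2 r; have := expn_gt0 2 l; rewrite /mval; nia.
  rewrite -exprD subnK // mul1r.
  by rewrite /mval mulnDr muln1 exprD exprM zr zl.
move=> x0 x1 xr xl.
by rewrite !expr_m2 // (exprD_pow2 pchar2F) expr1n ?xr ?xl.
Qed.

End Pchar2Field.

Section ClosedField.
Variable F : closedFieldType.

Lemma XmulXD1_surj (t : F) : exists x, x * (x + 1) = t.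
Proof.
have [x xt] := @solve_monicpoly F 2 (nth 0 [:: t; -1]) isT.
exists x; move: xt; rewrite !big_ord_recl big_ord0 /= => xt.
by rewrite mulrDr mulr1 -expr2 xt; ring.
Qed.

Lemma exists_fixed_notin p g (s : seq F) : p \in [pchar F] -> (0 < g)%N ->
  (size s < p ^ g)%N -> exists2 z, z ^+ (p ^ g) = z & z \notin s.
Proof.
move=> pcharFp g_gt0 s_lt; set n := (p ^ g)%N; pose P : {poly F} := 'X^n - 'X.
have n_gt1 : (1 < n)%N by rewrite -(expn0 p) ltn_exp2l ?prime_gt1 ?(pcharf_prime pcharFp).
have sizeX : (size (- 'X : {poly F}) < size ('X^n : {poly F}))%N.
  by rewrite size_polyN size_polyX size_polyXn ltnS.
have [rs P_rs] := closed_field_poly_normal P.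
rewrite /P lead_coefDl // lead_coefXn scale1r -/P in P_rs.
have size_rs : size rs = n.
  have : size P = n.+1 by rewrite size_polyDl // size_polyXn.
  by rewrite P_rs size_prod_XsubC => [[]].
have uniq_rs : uniq rs.
  have pcharPp : p \in [pchar {poly F}] by rewrite pchar_poly.
  rewrite -separable_prod_XsubC -P_rs unlock /P !derivE -mulr_natr.
  have -> : (n%:R : {poly F}) = 0.
    by apply/eqP; rewrite -(dvdn_pcharf pcharPp) /n -(prednK g_gt0) expnS dvdn_mulr.
  rewrite mulr0 sub0r -[X in coprimep _ X]scaleN1r.
  by rewrite coprimepZr ?oppr_eq0 ?oner_eq0 // coprimep1.
have [z z_rs z_s] : exists2 z, z \in rs & z \notin s.
  apply/allPn; apply: contraTN s_lt => /allP rs_s.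
  by rewrite -leqNgt -/n -size_rs uniq_leq_size.
exists z => //; move: z_rs; rewrite -root_prod_XsubC -P_rs /root /P !hornerE.
by rewrite subr_eq0 => /eqP.
Qed.

Hypothesis pchar2F : (2 \in [pchar F])%N.

Lemma L1_root_pair_gcdn_gt2 r l : (2 < gcdn r l)%N -> exists x y : F,
  [/\ (x + 1) ^+ (mval r l - 2) = x ^+ (mval r l - 2),
      (y + 1) ^+ (mval r l - 2) = y ^+ (mval r l - 2),
      (x + y) ^+ (2 ^ l) = x + y & (x + y) * (x + y + 1) != 0].
Proof.
set g := gcdn r l => gcd_gt2; have g_gt0 : (0 < g)%N by apply: leq_trans gcd_gt2.
have pow2g_gt k : (k < 8)%N -> (k < 2 ^ g)%N.
  by move=> k_lt; apply: (leq_trans k_lt); rewrite -[8%N]/(2 ^ 3)%N leq_exp2l.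
have [x xg] := exists_fixed_notin (s := [:: 0; 1]) pchar2F g_gt0 (pow2g_gt 2 isT).
have [y yg] := exists_fixed_notin (s := [:: 0; 1; x; x + 1]) pchar2F g_gt0 (pow2g_gt 4 isT).
rewrite !inE !negb_or -!(addr_eq0_pchar2 pchar2F _ 1).
move=> /and4P [y0 y1 yx yx1] /andP [x0 x1].
have fixed_rl (z : F) : z ^+ (2 ^ g) = z -> z ^+ (2 ^ r) = z /\ z ^+ (2 ^ l) = z.
  by move=> zg; split; apply: expr_fixed_dvdn zg; rewrite ?dvdn_gcdl ?dvdn_gcdr.
have [[xr xl] [yr yl]] := (fixed_rl x xg, fixed_rl y yg).
exists x, y; split; rewrite ?L1_root_of_fixed ?(exprD_pow2 pchar2F) ?xl ?yl //.
rewrite mulf_neq0 // addr_eq0_pchar2 // eq_sym //.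
by apply: contra_neq yx1 => ->; rewrite addrA addrr_pchar2 // add0r.
Qed.

End ClosedField.

Theorem proposition3p4 (F : closedFieldType) (h2 : (2 \in [pchar F])%N)
  (r l : nat) (hr : (2 <= r)%N) (hl : (1 <= l)%N)
  (Q : {poly F}) (hQ : is_L1 (mval r l) Q) :
  (gcdn r l <= 2)%N <->
  (forall ti tj : F, root Q^`() ti -> root Q^`() tj -> ti != tj ->
     (tracep F l).[ti + tj] != 0).
Proof.
case: r hr hQ => // a _ hQ; have rootE := root_deriv_L1 h2 _ hQ.
split=> [gcd_le2 ti tj | tr_neq0].
  have [[x <-] [y <-]] := (XmulXD1_surj ti, XmulXD1_surj tj).
  rewrite !rootE => /eqP xm /eqP ym.
  rewrite -addr_eq0_pchar2 // (XmulXD1_add h2) (horner_tracep_pchar2 h2).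
  rewrite addr_eq0_pchar2 //; exact/contra_neq/(L1_root_pair_gcdn_le2 h2 gcd_le2 xm ym).
rewrite leqNgt; apply/negP => /(L1_root_pair_gcdn_gt2 h2) [x [y [xm ym xyl xy_neq0]]].
have := tr_neq0 (x * (x + 1)) (y * (y + 1)); rewrite !rootE xm ym !eqxx.
rewrite -addr_eq0_pchar2 // (XmulXD1_add h2) xy_neq0 (horner_tracep_pchar2 h2) xyl.
by rewrite addrr_pchar2 // eqxx => /(_ isT isT isT).
Qed.
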